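(* Let $R=\mathrm{Mat}_n(\mathcal O_D,\underline m)$ be a standard monomial order of positive type (i.e. $m_{ij}\ge 0$ for all $i,j$) which is a Bass order. Define $\underline m'=(m'_{ij})$ by $m'_{ij}=1$ if $m_{ij}\ne 0$ and $m'_{ij}=0$ if $m_{ij}=0$. Then $R'=\mathrm{Mat}_n(\mathcal O_D,\underline m')$ is an $\mathcal O$-order (i.e. $\underline m'$ satisfies the order condition) containing $R$, and $R'$ is a Bass order.
   Context: Let $k$ be a non-Archimedean local field with ring of integers $\mathcal O$, let $D$ be a finite-dimensional central division algebra over $k$, $\mathcal O_D$ its valuation ring, $\mathfrak P$ its maximal ideal. For $\underline m=(m_{ij})\in\mathrm{Mat}_n(\mathbb Z)$, $\mathrm{Mat}_n(\mathcal O_D,\underline m)=\{(a_{ij})\in\mathrm{Mat}_n(D): a_{ij}\in\mathfrak P^{m_{ij}}\ \forall i,j\}$; the order condition is $m_{ii}=0$ for all $i$ and $m_{ik}\le m_{ij}+m_{jk}$ for all $i,j,k$, and then this is an $\mathcal O$-order (standard monomial order of level $\underline m$). An $\mathcal O$-order $R$ is Gorenstein if every exact sequence $0\to R\to M\to N\to 0$ of right $R$-lattices splits; $R$ is Bass if every $\mathcal O$-order containing $R$ is Gorenstein. *)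

From HB Require Import structures.
From mathcomp Require Import all_boot all_order all_algebra all_field.
Set Implicit Arguments. Unset Strict Implicit. Unset Printing Implicit Defensive.
Import Order.TTheory GRing.Theory Num.Theory.
Local Open Scope ring_scope.

(* Discrete valuations (the value at 0 is irrelevant: 0 is treated    *)
(* separately, v 0 = +oo by convention).                               *)

Definition vge {T : zmodType} (v : T -> int) (N : int) (x : T) : bool :=
  (x == 0) || (N <= v x).

Definition is_discrete_valuation {T : nzRingType} (v : T -> int) : Prop :=
  [/\ forall x y : T, x != 0 -> y != 0 -> v (x * y) = v x + v y,
      forall x y : T, x != 0 -> y != 0 -> x + y != 0 ->
                      Num.min (v x) (v y) <= v (x + y)
    & exists pi : T, pi != 0 /\ v pi = 1 ].

Definition nonarch_local_field (k : fieldType) (v : k -> int) : Prop :=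
  [/\ is_discrete_valuation v,
      forall u : nat -> k,
        (forall N : int, exists M : nat, forall p q : nat,
            (M <= p)%N -> (M <= q)%N -> vge v N (u p - u q)) ->
        exists l : k, forall N : int, exists M : nat, forall p : nat,
            (M <= p)%N -> vge v N (u p - l)
    & (* finite residue field O / pi O *)
      exists s : seq k, all (vge v 0) s /\
        forall x : k, vge v 0 x -> exists2 y, y \in s & vge v 1 (x - y) ].

(* D is a central division algebra over k (finite-dimensional, since    *)
(* D is an falgType k), and w is the normalized valuation of D extending *)
(* (up to a positive factor) the valuation v of k.                       *)
Definition central_division_algebra (k : fieldType) (D : falgType k) : Prop :=
  (forall x : D, x != 0 -> x \is a GRing.unit) /\
  (forall z : D, (forall y : D, z * y = y * z) -> exists c : k, z = c%:A).

Definition valuation_of_D (k : fieldType) (v : k -> int) (D : falgType k)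
  (w : D -> int) : Prop :=
  is_discrete_valuation w /\
  exists e : nat, (0 < e)%N /\ forall c : k, c != 0 -> w (c%:A) = (e%:Z * v c)%R.

Section MatD.
Variables (k : fieldType) (v : k -> int) (D : falgType k) (w : D -> int).
Variable n : nat.

Definition mxD := 'M[D]_n.

Definition scalek (c : k) (X : 'M[D]_n) : 'M[D]_n := map_mx (fun d => c *: d) X.

Definition inO (c : k) : bool := vge v 0 c.

Definition inPpow (m : int) (x : D) : bool := vge w m x.

Definition MatOD (m : 'I_n -> 'I_n -> int) : pred 'M[D]_n :=
  fun X => [forall i, forall j, inPpow (m i j) (X i j)].

Definition order_condition (m : 'I_n -> 'I_n -> int) : Prop :=
  (forall i, m i i = 0) /\ (forall i j l, m i l <= m i j + m j l).

Definition positive_type (m : 'I_n -> 'I_n -> int) : Prop :=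
  forall i j, 0 <= m i j.

Definition is_O_order (R : pred 'M[D]_n) : Prop :=
  [/\ (1%:M \in R /\ {in R &, forall x y, x - y \in R}),
      {in R &, forall x y, x *m y \in R},
      (forall c X, inO c -> X \in R -> scalek c X \in R),
      (exists (d : nat) (g : 'I_d -> 'M[D]_n), (forall i, g i \in R) /\
         forall X, X \in R -> exists a : 'I_d -> k,
           (forall i, inO (a i)) /\ X = \sum_(i < d) scalek (a i) (g i))
    & (forall X : 'M[D]_n, exists s : seq (k * 'M[D]_n),
          all (fun p => p.2 \in R) s /\ X = \sum_(p <- s) scalek p.1 p.2) ].

(* Right R-lattices: finitely generated right R-modules which are       *)
(* O-torsion-free.  The action is given on all of Mat_n(D) but only its  *)
(* values on R matter.                                                   *)
Record rlattice (R : pred 'M[D]_n) := RLattice {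
  rl_car :> zmodType;
  rl_act : rl_car -> 'M[D]_n -> rl_car;
  rl_addl : forall r, r \in R -> forall x y, rl_act (x + y) r = rl_act x r + rl_act y r;
  rl_addr : forall x r s, r \in R -> s \in R -> rl_act x (r + s) = rl_act x r + rl_act x s;
  rl_one : forall x, rl_act x 1%:M = x;
  rl_assoc : forall x r s, r \in R -> s \in R -> rl_act (rl_act x r) s = rl_act x (r *m s);
  rl_fingen : exists (d : nat) (g : 'I_d -> rl_car), forall x, exists r : 'I_d -> 'M[D]_n,
      (forall i, r i \in R) /\ x = \sum_(i < d) rl_act (g i) (r i);
  rl_torsionfree : forall (c : k) x, inO c -> c != 0 ->
      rl_act x (scalek c 1%:M) = 0 -> x = 0
}.

Definition rhom (R : pred 'M[D]_n) (M N : rlattice R) (f : M -> N) : Prop :=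
  (forall x y, f (x + y) = f x + f y) /\
  (forall x r, r \in R -> f (rl_act x r) = rl_act (f x) r).

Definition rhom_from_reg (R : pred 'M[D]_n) (M : rlattice R) (f : 'M[D]_n -> M) : Prop :=
  {in R &, forall x y, f (x + y) = f x + f y} /\
  {in R &, forall x r, f (x *m r) = rl_act (f x) r}.

Definition rhom_to_reg (R : pred 'M[D]_n) (M : rlattice R) (h : M -> 'M[D]_n) : Prop :=
  [/\ forall x, h x \in R,
      forall x y, h (x + y) = h x + h y
    & forall x r, r \in R -> h (rl_act x r) = h x *m r].

Definition Gorenstein (R : pred 'M[D]_n) : Prop :=
  forall (M N : rlattice R) (f : 'M[D]_n -> M) (g : M -> N),
    rhom_from_reg f -> rhom g ->
    {in R &, injective f} ->
    (forall y : N, exists x : M, g x = y) ->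
    (forall x : M, g x = 0 <-> exists2 y, y \in R & f y = x) ->
    exists h : M -> 'M[D]_n, rhom_to_reg h /\ {in R, forall y, h (f y) = y}.

Definition Bass (R : pred 'M[D]_n) : Prop :=
  is_O_order R /\
  forall S : pred 'M[D]_n, is_O_order S -> {subset R <= S} -> Gorenstein S.

Definition mprime (m : 'I_n -> 'I_n -> int) : 'I_n -> 'I_n -> int :=
  fun i j => if m i j == 0 then 0 else 1.

End MatD.

From HB Require Import structures.
From mathcomp Require Import all_boot all_order all_algebra all_field.
From mathcomp Require Import zify.
From Stdlib Require Import Classical_Prop.
Import Order.TTheory GRing.Theory Num.Theory.
Local Open Scope ring_scope.
Set Implicit Arguments. Unset Strict Implicit. Unset Printing Implicit Defensive.

(* Replacing the exponents by 0/1 only lowers them, so R' contains R and is an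
   order; it is finitely generated over O because a power of a uniformizer
   scales it into R, and O-submodules of finitely generated O-modules are
   finitely generated (O is a discrete valuation ring).  Finally, every
   over-order of R' is an over-order of R, hence Gorenstein. *)

Section DiscreteValuation.
Variables (T : nzRingType) (v : T -> int).
Hypothesis Hv : is_discrete_valuation v.

Lemma dval1 : v 1 = 0.
Proof.
have [vM _ _] := Hv; have := vM 1 1 (oner_neq0 T) (oner_neq0 T).
rewrite mulr1; lia.
Qed.

Lemma dvalN x : x != 0 -> v (- x) = v x.
Proof.
move=> x0; have [vM _ _] := Hv.
have N1_neq0 : (-1 : T) != 0 by rewrite oppr_eq0 oner_neq0.
have vN1 : v (-1) = 0.
  by have := vM _ _ N1_neq0 N1_neq0; rewrite mulrNN mulr1 dval1; lia.
by rewrite -mulN1r vM // vN1 add0r.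
Qed.

Lemma vge0 N : vge v N 0.
Proof. by rewrite /vge eqxx. Qed.

Lemma vge_le N N' x : N <= N' -> vge v N' x -> vge v N x.
Proof. by rewrite /vge => le_NN'; case: (x == 0) => //= /(le_trans le_NN'). Qed.

Lemma vgeD N x y : vge v N x -> vge v N y -> vge v N (x + y).
Proof.
rewrite /vge; have [->|x0] /= := eqVneq x 0; first by rewrite add0r.
have [->|y0] /= := eqVneq y 0; first by rewrite addr0 (negbTE x0).
move=> vx vy; have [//|xy0] /= := eqVneq (x + y) 0.
have [_ vD _] := Hv; apply: le_trans (vD x y x0 y0 xy0).
by rewrite le_min vx vy.
Qed.

Lemma vgeN N x : vge v N x -> vge v N (- x).
Proof. by rewrite /vge oppr_eq0; have [//|x0] /= := eqVneq x 0; rewrite dvalN. Qed.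

Lemma vgeB N x y : vge v N x -> vge v N y -> vge v N (x - y).
Proof. by move=> vx vy; apply: vgeD => //; apply: vgeN. Qed.

Lemma vgeM N M x y : vge v N x -> vge v M y -> vge v (N + M) (x * y).
Proof.
rewrite /vge; have [->|x0] /= := eqVneq x 0; first by rewrite mul0r eqxx.
have [->|y0] /= := eqVneq y 0; first by rewrite mulr0 eqxx.
have [vM _ _] := Hv; rewrite vM // => vx vy; apply/orP; right; exact: lerD.
Qed.

Lemma vge_sum N (I : Type) (r : seq I) (P : pred I) (F : I -> T) :
  (forall i, vge v N (F i)) -> vge v N (\sum_(i <- r | P i) F i).
Proof. by move=> vF; elim/big_ind: _ => //; [apply: vge0 | apply: vgeD]. Qed.

End DiscreteValuation.

Section FieldValuation.
Variables (k : fieldType) (v : k -> int).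
Hypothesis Hv : is_discrete_valuation v.

Lemma dvalf_div a b : a != 0 -> b != 0 -> v (a / b) = v a - v b.
Proof.
move=> a0 b0; have [vM _ _] := Hv.
have ab0 : a / b != 0 by rewrite mulf_neq0 // invr_neq0.
by have := vM _ _ ab0 b0; rewrite divfK //; lia.
Qed.

Lemma dvalfX p N : p != 0 -> v (p ^+ N) = N%:Z * v p.
Proof.
move=> p0; have [vM _ _] := Hv.
elim: N => [|N IH]; first by rewrite expr0 dval1 // mul0r.
by rewrite exprS vM ?expf_neq0 // IH; lia.
Qed.

End FieldValuation.

Lemma ex_min_int (T : Type) (P : T -> Prop) (f : T -> int) :
  (forall a, P a -> 0 <= f a) -> (exists a, P a) ->
  exists a0, P a0 /\ forall a, P a -> f a0 <= f a.
Proof.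
move=> f_ge0 [a Pa].
suff min_below N b : P b -> f b <= N%:Z ->
    exists a0, P a0 /\ forall c, P c -> f a0 <= f c.
  by apply: (min_below (absz (f a)) a Pa); have := f_ge0 a Pa; lia.
elim: N b => [|N IH] b Pb fb.
  by exists b; split=> // c Pc; have := f_ge0 c Pc; lia.
have [[c [Pc fcb]]|no_smaller] := classic (exists c, P c /\ f c < f b).
  by apply: (IH c Pc); lia.
exists b; split=> // c Pc; rewrite leNgt; apply/negP => fcb.
by apply: no_smaller; exists c.
Qed.

Section ScaleMatrix.
Variables (k : fieldType) (D : falgType k) (n : nat).
Local Notation V := 'M[D]_n.

Lemma scalekD c (X Y : V) : scalek c (X + Y) = scalek c X + scalek c Y.
Proof. by apply/matrixP => i j; rewrite !mxE scalerDr. Qed.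

Lemma scalek0 c : scalek c (0 : V) = 0.
Proof. by apply/matrixP => i j; rewrite !mxE scaler0. Qed.

Lemma scale0k (X : V) : scalek 0 X = 0.
Proof. by apply/matrixP => i j; rewrite !mxE scale0r. Qed.

Lemma scale1k (X : V) : scalek 1 X = X.
Proof. by apply/matrixP => i j; rewrite !mxE scale1r. Qed.

Lemma scalekA a b (X : V) : scalek a (scalek b X) = scalek (a * b) X.
Proof. by apply/matrixP => i j; rewrite !mxE scalerA. Qed.

Lemma scalekBl a b (X : V) : scalek (a - b) X = scalek a X - scalek b X.
Proof. by apply/matrixP => i j; rewrite !mxE scalerBl. Qed.

Lemma scalek_sum c (I : Type) (r : seq I) (P : pred I) (F : I -> V) :
  scalek c (\sum_(i <- r | P i) F i) = \sum_(i <- r | P i) scalek c (F i).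
Proof. exact: (big_morph _ (scalekD c) (scalek0 c)). Qed.

End ScaleMatrix.

Section OSubmodule.
Variables (k : fieldType) (v : k -> int).
Hypothesis Hv : is_discrete_valuation v.
Variables (D : falgType k) (n : nat).
Local Notation V := 'M[D]_n.

Definition Ospan d (g : 'I_d -> V) (x : V) : Prop :=
  exists a : 'I_d -> k, (forall i, inO v (a i)) /\ x = \sum_(i < d) scalek (a i) (g i).

Definition Osubmodule (M : V -> Prop) : Prop :=
  [/\ M 0, (forall x y, M x -> M y -> M (x - y))
    & (forall c x, inO v c -> M x -> M (scalek c x))].

Definition Ofingen (M : V -> Prop) : Prop :=
  exists d (g : 'I_d -> V), (forall i, M (g i)) /\ forall x, M x -> Ospan g x.

Lemma Osubmodule_Ospan d (g : 'I_d -> V) : Osubmodule (Ospan g).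
Proof.
split.
- exists (fun=> 0); split=> [i|]; first exact: vge0.
  by rewrite big1 // => i _; rewrite scale0k.
- move=> x y [a [Oa ->]] [b [Ob ->]]; exists (fun i => a i - b i); split.
    by move=> i; apply: (vgeB Hv (Oa i) (Ob i)).
  by rewrite -sumrB; apply: eq_bigr => i _; rewrite scalekBl.
- move=> c x Oc [a [Oa ->]]; exists (fun i => c * a i); split.
    by move=> i; have := vgeM Hv Oc (Oa i); rewrite addr0.
  by rewrite scalek_sum; apply: eq_bigr => i _; rewrite scalekA.
Qed.

Lemma OsubmoduleI (M N : V -> Prop) :
  Osubmodule M -> Osubmodule N -> Osubmodule (fun x => M x /\ N x).
Proof.
move=> [M0 MB MZ] [N0 NB NZ]; split=> //.
- by move=> x y [Mx Nx] [My Ny]; split; [apply: MB | apply: NB].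
- by move=> c x Oc [Mx Nx]; split; [apply: MZ | apply: NZ].
Qed.

Lemma Ospan_recl d (g : 'I_d.+1 -> V) x :
  Ospan g x -> exists a y, [/\ inO v a, Ospan (g \o lift ord0) y
                              & x = scalek a (g ord0) + y].
Proof.
move=> [a [Oa ->]]; exists (a ord0), (\sum_(i < d) scalek (a (lift ord0 i)) (g (lift ord0 i))).
split; [exact: Oa | exists (a \o lift ord0) | by rewrite big_ord_recl].
by split=> // i; apply: Oa.
Qed.

Definition consg d (z : V) (g : 'I_d -> V) (i : 'I_d.+1) : V :=
  if unlift ord0 i is Some j then g j else z.

Lemma Ospan_cons d (g : 'I_d -> V) z b y :
  inO v b -> Ospan g y -> Ospan (consg z g) (scalek b z + y).
Proof.
move=> Ob [a [Oa ->]].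
exists (fun i => if unlift ord0 i is Some j then a j else b); split.
  by move=> i; case: unlift.
rewrite big_ord_recl /consg unlift_none; congr (_ + _).
by apply: eq_bigr => i _; rewrite liftK.
Qed.

(* [a0] is a leading coefficient of minimal valuation in [M], so every
   leading coefficient in [M] is an O-multiple of it; subtracting that
   multiple of [scalek a0 (g ord0) + y0] lands in [M ∩ span (tail g)]. *)
Lemma Ospan_lead_generator d (g : 'I_d.+1 -> V) (M : V -> Prop) d'
    (g' : 'I_d' -> V) a0 y0 :
  Osubmodule M -> (forall x, M x -> Ospan g x) ->
  (forall x, M x /\ Ospan (g \o lift ord0) x -> Ospan g' x) ->
  a0 != 0 -> Ospan (g \o lift ord0) y0 -> M (scalek a0 (g ord0) + y0) ->
  (forall a y, a != 0 -> inO v a -> Ospan (g \o lift ord0) y ->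
     M (scalek a (g ord0) + y) -> v a0 <= v a) ->
  forall x, M x -> Ospan (consg (scalek a0 (g ord0) + y0) g') x.
Proof.
move=> HM Mg Mg' a0_neq0 y0_span Mz a0_min x Mx.
have [MO MB MZ] := HM; have [_ SB SZ] := Osubmodule_Ospan (g \o lift ord0).
have [a [y [Oa y_span def_x]]] := Ospan_recl (Mg x Mx).
have [a_eq0|a_neq0] := eqVneq a 0.
  rewrite -[x]add0r -(scale0k (scalek a0 (g ord0) + y0)).
  apply: Ospan_cons; first exact: vge0.
  have def_y : x = y by rewrite def_x a_eq0 scale0k add0r.
  by apply: Mg'; rewrite def_y -{1}def_y.
set b := a / a0.
have Ob : inO v b.
  have := a0_min a y a_neq0 Oa y_span; rewrite -def_x => /(_ Mx) le_a0a.
  by rewrite /inO /vge /b dvalf_div //; apply/orP; right; lia.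
have -> : x = scalek b (scalek a0 (g ord0) + y0) + (x - scalek b (scalek a0 (g ord0) + y0)).
  by rewrite addrC subrK.
apply: Ospan_cons => //; apply: Mg'; split.
  by apply: MB => //; apply: MZ.
rewrite def_x scalekD scalekA /b divfK // opprD addrACA subrr add0r.
by apply: SB => //; apply: SZ.
Qed.

Lemma Ospan_scalekV d (g : 'I_d -> V) c x : c != 0 ->
  Ospan g (scalek c x) -> Ospan (fun i => scalek c^-1 (g i)) x.
Proof.
move=> c_neq0 [a [Oa def_cx]]; exists a; split=> //.
rewrite -[x]scale1k -(mulVf c_neq0) -scalekA def_cx scalek_sum.
by apply: eq_bigr => i _; rewrite !scalekA mulrC.
Qed.

Lemma Osubmodule_fingen d (g : 'I_d -> V) (M : V -> Prop) :
  Osubmodule M -> (forall x, M x -> Ospan g x) -> Ofingen M.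
Proof.
elim: d g M => [|d IH] g M HM Mg; first by exists 0%N, g; split=> // -[].
pose J a := [/\ a != 0, inO v a
  & exists y, Ospan (g \o lift ord0) y /\ M (scalek a (g ord0) + y)].
have [J_nonempty|J_empty] := classic (exists a, J a); last first.
  apply: (IH (g \o lift ord0) M HM) => x Mx.
  have [a [y [Oa y_span def_x]]] := Ospan_recl (Mg x Mx).
  have [a0|a_neq0] := eqVneq a 0; first by rewrite def_x a0 scale0k add0r.
  by case: J_empty; exists a; split=> //; exists y; rewrite -def_x.
have [a0 [[a0_neq0 _ [y0 [y0_span Mz]]] a0_min]] :
    exists a0, J a0 /\ forall a, J a -> v a0 <= v a.
  apply: ex_min_int => // a [a_neq0 Oa _].
  by move: Oa; rewrite /inO /vge (negbTE a_neq0).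
have [d' [g' [Mg' g'_span]]] :=
  IH (g \o lift ord0) _ (OsubmoduleI HM (Osubmodule_Ospan _)) (fun x Mx => Mx.2).
exists d'.+1, (consg (scalek a0 (g ord0) + y0) g'); split.
  by move=> i; rewrite /consg; case: unlift => [j|]; [apply: (Mg' j).1 | apply: Mz].
apply: Ospan_lead_generator => // a y a_neq0 Oa y_span Ma.
by apply: a0_min; split=> //; exists y.
Qed.

End OSubmodule.

Section MonomialOrder.
Variables (k : fieldType) (v : k -> int) (D : falgType k) (w : D -> int).
Hypothesis Hw : is_discrete_valuation w.
Variable e : nat.
Hypothesis w_scalar : forall c : k, c != 0 -> w c%:A = e%:Z * v c.
Variable n : nat.
Implicit Types m : 'I_n -> 'I_n -> int.

Lemma MatODP m (X : 'M[D]_n) :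
  reflect (forall i j, inPpow w (m i j) (X i j)) (X \in MatOD w m).
Proof.
apply: (iffP forallP) => [MX i j | MX i]; first exact: (forallP (MX i) j).
by apply/forallP => j; apply: MX.
Qed.

Lemma MatOD_le m1 m2 : (forall i j, m1 i j <= m2 i j) ->
  {subset MatOD w m2 <= MatOD w m1}.
Proof.
by move=> le_m X /MatODP MX; apply/MatODP => i j; apply: vge_le (MX i j).
Qed.

Lemma MatOD0 m : 0 \in MatOD w m.
Proof. by apply/MatODP => i j; rewrite mxE; apply: vge0. Qed.

Lemma MatODB m : {in MatOD w m &, forall X Y, X - Y \in MatOD w m}.
Proof.
move=> X Y /MatODP MX /MatODP MY; apply/MatODP => i j.
by rewrite !mxE; apply: (vgeB Hw (MX i j) (MY i j)).
Qed.

Lemma MatODM m : order_condition m ->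
  {in MatOD w m &, forall X Y, X *m Y \in MatOD w m}.
Proof.
move=> [_ m_tri] X Y /MatODP MX /MatODP MY; apply/MatODP => i l.
rewrite mxE; apply: (vge_sum Hw) => j.
exact: vge_le (m_tri i j l) (vgeM Hw (MX i j) (MY j l)).
Qed.

Lemma vge_scale c N (x : D) : c != 0 -> vge w N x -> vge w (e%:Z * v c + N) (c *: x).
Proof.
move=> c_neq0; rewrite -mulr_algl; apply: vgeM => //.
by rewrite /vge w_scalar // lexx orbT.
Qed.

Lemma MatOD_scalek_shift c m1 m2 (X : 'M[D]_n) : c != 0 ->
  (forall i j, m2 i j <= e%:Z * v c + m1 i j) ->
  X \in MatOD w m1 -> scalek c X \in MatOD w m2.
Proof.
move=> c_neq0 le_m /MatODP MX; apply/MatODP => i j.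
by rewrite mxE; apply: vge_le (le_m i j) (vge_scale c_neq0 (MX i j)).
Qed.

Lemma MatOD_scalek c m (X : 'M[D]_n) :
  inO v c -> X \in MatOD w m -> scalek c X \in MatOD w m.
Proof.
have [-> _ _|c_neq0] := eqVneq c 0; first by rewrite scale0k MatOD0.
rewrite /inO /vge (negbTE c_neq0) /= => vc_ge0.
by apply: MatOD_scalek_shift => // i j; rewrite lerDr; apply: mulr_ge0.
Qed.

End MonomialOrder.

Section OverOrder.
Variables (k : fieldType) (v : k -> int) (D : falgType k) (w : D -> int).
Hypotheses (Hv : is_discrete_valuation v) (Hvw : valuation_of_D v w).
Variable n : nat.
Implicit Types m : 'I_n -> 'I_n -> int.

Lemma MatOD_fingen_le m1 m : (forall i j, m1 i j <= m i j) ->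
  Ofingen v (fun X => X \in MatOD w m) -> Ofingen v (fun X => X \in MatOD w m1).
Proof.
move=> le_m [d [g [_ g_span]]].
have [Hw [e [e_gt0 w_scalar]]] := Hvw; have [_ _ [pi [pi_neq0 v_pi]]] := Hv.
pose N := (\max_(ij : 'I_n * 'I_n) absz (m ij.1 ij.2 - m1 ij.1 ij.2))%N.
have c_neq0 : pi ^+ N != 0 by rewrite expf_neq0.
have scale_into X : X \in MatOD w m1 -> scalek (pi ^+ N) X \in MatOD w m.
  apply: (MatOD_scalek_shift Hw w_scalar c_neq0) => i j.
  rewrite (dvalfX Hv) // v_pi mulr1.
  have := @leq_bigmax _ (fun ij : 'I_n * 'I_n => absz (m ij.1 ij.2 - m1 ij.1 ij.2)) (i, j).
  rewrite -/N /=; nia.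
apply: (Osubmodule_fingen Hv (g := fun i => scalek (pi ^+ N)^-1 (g i))).
  split; [exact: MatOD0 | exact: (MatODB Hw) | move=> c X; apply: (MatOD_scalek Hw w_scalar)].
by move=> X M1X; apply: Ospan_scalekV => //; apply/g_span/scale_into.
Qed.

Lemma is_O_order_MatOD_le m1 m : order_condition m1 ->
  (forall i j, m1 i j <= m i j) ->
  is_O_order v (MatOD w m) -> is_O_order v (MatOD w m1).
Proof.
move=> ord_m1 le_m [[R1 _] _ _ R_fingen R_spans].
have [Hw [e [_ w_scalar]]] := Hvw.
have sub_m := MatOD_le le_m.
split.
- by split; [apply: sub_m | apply: (MatODB Hw)].
- exact: (MatODM Hw).
- by move=> c X; apply: (MatOD_scalek Hw w_scalar).
- exact: MatOD_fingen_le R_fingen.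
- move=> X; have [s [sR ->]] := R_spans X; exists s; split=> //.
  by apply/allP => p /(allP sR) /sub_m.
Qed.

End OverOrder.

Lemma Bass_overorder (k : fieldType) (v : k -> int) (D : falgType k) (n : nat)
    (R S : pred 'M[D]_n) :
  Bass v R -> is_O_order v S -> {subset R <= S} -> Bass v S.
Proof.
move=> [_ R_Gor] S_order sub_RS; split=> // T T_order sub_ST.
by apply: R_Gor => // X /sub_RS /sub_ST.
Qed.

Section Mprime.
Variables (n : nat) (m : 'I_n -> 'I_n -> int).
Hypothesis m_ge0 : positive_type m.

Lemma mprime_le i j : mprime m i j <= m i j.
Proof. by have := m_ge0 i j; rewrite /mprime; case: eqP => /=; lia. Qed.

(* The triangle inequality for [mprime m] fails only when [m i l != 0] while
   [m i j = m j l = 0], which the triangle inequality for [m] excludes. *)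
Lemma mprime_order_condition : order_condition m -> order_condition (mprime m).
Proof.
move=> [m_diag m_tri]; split=> [i|i j l]; first by rewrite /mprime m_diag eqxx.
have := m_tri i j l; have := m_ge0 i j; have := m_ge0 j l; have := m_ge0 i l.
by rewrite /mprime; do 3 case: eqP => /=; lia.
Qed.

End Mprime.

Theorem lemma5p2 (k : fieldType) (v : k -> int) (Hk : nonarch_local_field v)
  (D : falgType k) (HD : central_division_algebra D) (w : D -> int)
  (Hw : valuation_of_D v w) (n : nat) (m : 'I_n -> 'I_n -> int) :
  order_condition m -> positive_type m ->
  Bass v (MatOD w m) ->
  [/\ order_condition (mprime m),
      is_O_order v (MatOD w (mprime m)),
      {subset MatOD w m <= MatOD w (mprime m)}
    & Bass v (MatOD w (mprime m))].
Proof.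
move=> ord_m m_ge0 R_Bass; have [Hv _ _] := Hk.
have ord_m' := mprime_order_condition m_ge0 ord_m.
have sub_RR' : {subset MatOD w m <= MatOD w (mprime m)} := MatOD_le (mprime_le m_ge0).
have R'_order := is_O_order_MatOD_le Hv Hw ord_m' (mprime_le m_ge0) R_Bass.1.
by split=> //; apply: Bass_overorder R_Bass R'_order sub_RR'.
Qed.
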